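(* Let $k\ge2$. For all integers $n\ge1$ and $i\ge0$, $|\mathsf{Manila}_k(n,i)|=|\mathsf{Paths}_k(n,i)|$.
   Context: Fix $k\ge2$. The sets $\mathsf{Manila}_k(n,i)$ of formal words (manila folder configurations: $n$ folders each with $k-1$ compartments, $i+1$ spines visible from below) are defined recursively: (M1) $\mathsf{Manila}_k(0,-1)=\{\epsilon\}$ (the empty configuration); (M2) for $n\ge1$, $\mathsf{Manila}_k(n,0)$ consists of all bracketed tuples $(M_1,\dots,M_{k-1})$ with $M_j\in\mathsf{Manila}_k(n_j,i_j)$ for some $n_j\ge0$ and any $i_j$, where $n_1+\dots+n_{k-1}=n-1$; (M3) for $\ell>1$, $\mathsf{Manila}_k(n,\ell-1)$ consists of all concatenations $M_1M_2\cdots M_\ell$ with $M_j\in\mathsf{Manila}_k(n_j,0)$ and $n_1+\dots+n_\ell=n$. $\mathsf{Paths}_k(n,i)$ is the set of lattice paths from $((k-1)n,n)$ to $(0,0)$ using unit south steps $(0,-1)$ and unit west steps $(-1,0)$, staying in the first quadrant weakly below the line $(k-1)y=x$ (i.e. $(k-1)y\le x$ at every point), which meet the line $(k-1)y=x$ at exactly $i$ lattice points other than the two endpoints. *)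

From HB Require Import structures.
From mathcomp Require Import all_boot all_order all_algebra.
Set Implicit Arguments. Unset Strict Implicit. Unset Printing Implicit Defensive.

Inductive sym := LP | Comma | RP.

Definition sym_eqb (a b : sym) : bool :=
  match a, b with LP, LP | Comma, Comma | RP, RP => true | _, _ => false end.
Lemma sym_eqP : Equality.axiom sym_eqb.
Proof. by case; case; constructor. Qed.
HB.instance Definition _ := hasDecEq.Build sym sym_eqP.

Definition word := seq sym.

Definition commasep (ws : seq word) : word :=
  match ws with
  | [::] => [::]
  | w :: ws' => w ++ flatten [seq Comma :: v | v <- ws']
  end.

Definition bracket (ws : seq word) : word := LP :: commasep ws ++ [:: RP].

(* manila k n i w  <->  w \in Manila_k(n,i)
   manila_tuple k c N ws <-> ws = [M_1;...;M_c], M_j \in Manila_k(n_j,i_j)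
                             (any i_j), n_1+...+n_c = N
   manila_blocks k l N ws <-> ws = [M_1;...;M_l], M_j \in Manila_k(n_j,0),
                             n_1+...+n_l = N *)
Inductive manila (k : nat) : nat -> int -> word -> Prop :=
| ManM1 : manila k 0 (-1)%R [::]
| ManM2 n ws : 0 < n -> manila_tuple k k.-1 n.-1 ws ->
    manila k n 0%R (bracket ws)
| ManM3 l n ws : 1 < l -> manila_blocks k l n ws ->
    manila k n (Posz l.-1) (flatten ws)
with manila_tuple (k : nat) : nat -> nat -> seq word -> Prop :=
| TupNil : manila_tuple k 0 0 [::]
| TupCons c n1 i1 N w ws : manila k n1 i1 w -> manila_tuple k c N ws ->
    manila_tuple k c.+1 (n1 + N) (w :: ws)
with manila_blocks (k : nat) : nat -> nat -> seq word -> Prop :=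
| BlkNil : manila_blocks k 0 0 [::]
| BlkCons l n1 N w ws : manila k n1 0%R w -> manila_blocks k l N ws ->
    manila_blocks k l.+1 (n1 + N) (w :: ws).

(* A path from ((k-1)n, n) to (0,0) is the sequence of its unit steps:
   true = south step (0,-1), false = west step (-1,0). *)
Definition path_pt (k n : nat) (p : seq bool) (j : nat) : nat * nat :=
  let q := take j p in ((k.-1 * n - count (fun b => ~~ b) q)%N, (n - count id q)%N).

Definition below (k : nat) (pt : nat * nat) : bool := (k.-1 * pt.2 <= pt.1)%N.
Definition online (k : nat) (pt : nat * nat) : bool := (k.-1 * pt.2 == pt.1)%N.

Definition is_kpath (k n : nat) (p : seq bool) : bool :=
  [&& count id p == n, count (fun b => ~~ b) p == (k.-1 * n)%N &
      all (fun j => below k (path_pt k n p j)) (iota 0 (size p).+1)].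

(* number of lattice points of p on the line (k-1)y = x, endpoints excluded *)
Definition touches (k n : nat) (p : seq bool) : nat :=
  count (fun j => online k (path_pt k n p j)) (iota 1 (size p).-1).

Definition in_Paths (k n i : nat) (p : seq bool) : Prop :=
  is_kpath k n p /\ touches k n p = i.

From HB Require Import structures.
From mathcomp Require Import all_boot all_order all_algebra.
From mathcomp Require Import zify.
Set Implicit Arguments. Unset Strict Implicit. Unset Printing Implicit Defensive.

(* Send "(" to a south step and "," or ")" to a west step, and measure a path by
   the height x - (k-1) y of its points.  A bracketed tuple becomes an excursion
   that returns to height 0 only at its end: "(" climbs k-1 levels and each of the
   k-1 separators (k-2 commas and the closing ")") descends one level after a
   sub-excursion.  A concatenation of l tuples is thus an excursion with l-1
   interior zeros.  Conversely, cutting an excursion at its first return, and the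
   first block at its first visits to the levels k-2, ..., 0, exhibits the tuple
   structure, so by induction on length every excursion comes from a
   configuration; the configuration is recovered from its path by a decoder that
   remembers how many components each open bracket still lacks. *)

Definition join_with (T : Type) (x : T) (ds : seq (seq T)) : seq T :=
  if ds is d :: ds' then d ++ flatten [seq x :: e | e <- ds'] else [::].

Lemma join_with_cons T (x : T) d ds :
  join_with x (d :: ds) = d ++ (if ds is [::] then [::] else x :: join_with x ds).
Proof. by case: ds. Qed.

Lemma map_join_with T U (f : T -> U) x ds :
  map f (join_with x ds) = join_with (f x) (map (map f) ds).
Proof.
case: ds => [|d ds] //=; rewrite map_cat; congr (_ ++ _).
by elim: ds => //= e ds IH; rewrite map_cat IH.
Qed.

Lemma count_join_with T (a : pred T) x ds : ~~ a x ->
  count a (join_with x ds) = sumn (map (count a) ds).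
Proof.
move=> /negbTE ax; case: ds => [|d ds] //=; rewrite count_cat; congr (_ + _).
by elim: ds => //= e ds IH; rewrite count_cat /= ax IH.
Qed.

Lemma size_join_with (T : eqType) (x : T) ds d :
  d \in ds -> size d <= size (join_with x ds).
Proof.
case: ds => [|d0 ds] //=; rewrite size_cat inE => /predU1P [-> | ]; first lia.
elim: ds => //= e ds IH; rewrite inE size_cat /= => /predU1P [-> | /IH]; lia.
Qed.

Section Walk.

Variable k : nat.

(* The height of a lattice point (x, y) is x - (k-1) y; a south step raises it
   by k-1 and a west step lowers it by 1. *)
Definition step (h : nat) (b : bool) : nat := if b then h + k.-1 else h.-1.

Definition height (h : nat) (p : seq bool) : nat := foldl step h p.

Fixpoint walk (f h : nat) (p : seq bool) : option nat :=
  match p with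
  | [::] => Some h
  | b :: p' => if b then walk f (h + k.-1) p'
               else if f < h then walk f h.-1 p' else None
  end.

Definition excursion (p : seq bool) : bool := walk 0 0 p == Some 0.

Fixpoint inner_zeros (h : nat) (p : seq bool) : nat :=
  match p with
  | [::] => 0
  | b :: p' => (p' != [::]) && (step h b == 0) + inner_zeros (step h b) p'
  end.

Lemma walk_cat f h p q : walk f h (p ++ q) = obind (walk f ^~ q) (walk f h p).
Proof. by elim: p h => [|[] p IH] h //=; case: ifP. Qed.

Lemma walk_shift f h m p : walk (f + m) (h + m) p = omap (addn^~ m) (walk f h p).
Proof.
elim: p h => [|[] p IH] h //=; first by rewrite addnAC IH.
rewrite ltn_add2r; case: ifP => // lt_fh.
by rewrite -IH; congr walk; lia.
Qed.

Lemma walk_floor f g h p x : f <= g -> walk g h p = Some x -> walk f h p = Some x.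
Proof.
move=> le_fg; elim: p h => [|[] p IH] h //=; first exact: IH.
by case: ifP => // lt_gh; rewrite ifT; [exact: IH | lia].
Qed.

Lemma walk_height f h p x : walk f h p = Some x -> height h p = x.
Proof.
rewrite /height; elim: p h => [|[] p IH] h /=; [by case | exact: IH |].
by case: ifP => // _; apply: IH.
Qed.

Lemma walk_balance f h p x : walk f h p = Some x ->
  x + count (fun b => ~~ b) p = h + k.-1 * count id p.
Proof.
elim: p h => [|[] p IH] h /=; first by case=> <-; lia.
  by move/IH; rewrite mulnDr; lia.
by case: ifP => // lt_fh /IH; lia.
Qed.

Lemma excursion_lift p f h : f <= h -> excursion p -> walk f h p = Some h.
Proof.
move=> le_fh /eqP exc; apply: (walk_floor le_fh).
by have := walk_shift 0 0 h p; rewrite exc !add0n.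
Qed.

Lemma walk_first_hit p h s x : walk 0 s p = Some x -> x <= h < s ->
  exists D q, [/\ p = D ++ false :: q, walk h.+1 s D = Some h.+1 & walk 0 h q = Some x].
Proof.
elim: p s => [|[] p IH] s /=; first by case=> ->; lia.
  move=> /IH hit lt_hs; have [|D [q [-> HD Hq]]] := hit; first lia.
  by exists (true :: D), q.
case: ifP => // s_gt0 Hp lt_hs; have [eq_h|ne_h] := eqVneq s.-1 h.
  by exists [::], p; rewrite /= -eq_h; split=> //; congr Some; lia.
have [|D [q [-> HD Hq]]] := IH _ Hp; first lia.
by exists (false :: D), q; split=> //=; rewrite ifT //; lia.
Qed.

Lemma inner_zeros_cat h p q : inner_zeros h (p ++ q) =
  inner_zeros h p + [&& p != [::], q != [::] & height h p == 0]
  + inner_zeros (height h p) q.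
Proof.
rewrite /height; elim: p h => [|b p IH] h /=; first by rewrite add0n.
rewrite IH; case: p {IH} => [|b' p'] /=; last by rewrite !addnA.
by case: q => [|c q]; rewrite /= ?addn0 // addnC.
Qed.

Lemma inner_zeros_above f h p x : 0 < f <= h -> walk f h p = Some x ->
  inner_zeros h p = 0.
Proof.
elim: p h => [|[] p IH] h //= le_fh; last case: ifP => // lt_fh.
all: move=> Hp; rewrite (IH _ _ Hp); last lia.
all: by rewrite addn0 (_ : _ == 0 = false) ?andbF //; apply/negbTE; rewrite -lt0n; lia.
Qed.

Lemma inner_zerosE h p :
  inner_zeros h p = count (fun j => height h (take j p) == 0) (iota 1 (size p).-1).
Proof.
elim: p h => [|b p IH] h //=; rewrite IH; case: p {IH} => [|c p] //=.
by rewrite (iotaDl 1 1) count_map.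
Qed.

Lemma walk_down_split c D : walk 0 c D = Some 0 ->
  exists ds, [/\ size ds = c.+1, D = join_with false ds & all excursion ds].
Proof.
elim: c D => [|c IH] D HD; first by exists [:: D]; rewrite /= cats0 /excursion HD.
have [|D1 [q [-> HD1 Hq]]] := walk_first_hit (h := c) HD; first lia.
have [ds [size_ds -> exc_ds]] := IH _ Hq.
exists (D1 :: ds); split; first by rewrite /= size_ds.
  by rewrite join_with_cons; case: ds size_ds {exc_ds}.
rewrite /= exc_ds andbT /excursion.
have := walk_shift 0 0 c.+1 D1; rewrite !add0n HD1.
by case: (walk 0 0 D1) => //= y [E]; apply/eqP; congr Some; lia.
Qed.

Lemma walk_take f h p j x : walk f h p = Some x ->
  exists y, walk f h (take j p) = Some y.
Proof. by rewrite -{1}(cat_take_drop j p) walk_cat; case: walk => // y; exists y. Qed.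

Lemma walk_of_prefix_bounds h q :
  (forall j, j <= size q ->
     count (fun b => ~~ b) (take j q) <= h + k.-1 * count id (take j q)) ->
  walk 0 h q = Some (h + k.-1 * count id q - count (fun b => ~~ b) q).
Proof.
elim: q h => [|[] q IH] h bounds /=; first by rewrite muln0 addn0 subn0.
  rewrite IH => [|j le_jq]; first by congr Some; rewrite mulnDr; lia.
  by have := bounds j.+1 le_jq; rewrite /= mulnDr; lia.
have h_gt0 : 0 < h by have := bounds 1 isT; rewrite /= take0 /=; lia.
rewrite h_gt0 IH => [|j le_jq]; first by congr Some; lia.
by have := bounds j.+1 le_jq; rewrite /=; lia.
Qed.

Section Prime.

Hypothesis k_gt1 : 1 < k.

Lemma excursion_prime D : walk 1 k.-1 D = Some 1 ->
  excursion (true :: D ++ [:: false]) /\ inner_zeros 0 (true :: D ++ [:: false]) = 0.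
Proof.
move=> HD; split; first by rewrite /excursion /= walk_cat add0n (walk_floor _ HD).
rewrite /= inner_zeros_cat /= (inner_zeros_above _ HD); last lia.
by rewrite (walk_height HD) add0n (_ : k.-1 == 0 = false) ?andbF //; apply/eqP; lia.
Qed.

Lemma excursion_first_return p : excursion p -> p != [::] ->
  exists ds q, [/\ p = (true :: join_with false ds ++ [:: false]) ++ q,
    size ds = k.-1, all excursion ds & excursion q].
Proof.
case: p => [|[] p] //; rewrite /excursion /= add0n => Hp _.
have [|D [q [-> HD Hq]]] := walk_first_hit (h := 0) (eqP Hp); first lia.
have HD0 : walk 0 k.-2 D = Some 0.
  have := walk_shift 0 k.-2 1 D; rewrite add0n addn1 (_ : k.-2.+1 = k.-1) ?HD; last lia.
  by case: (walk 0 k.-2 D) => //= y [E]; congr Some; lia.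
have [ds [size_ds -> exc_ds]] := walk_down_split HD0.
exists ds, q; split=> //; [by rewrite /= -catA | lia | exact/eqP].
Qed.

End Prime.

End Walk.

Scheme manila_ind3 := Induction for manila Sort Prop
with manila_tuple_ind3 := Induction for manila_tuple Sort Prop
with manila_blocks_ind3 := Induction for manila_blocks Sort Prop.
Combined Scheme manila_mut_ind from manila_ind3, manila_tuple_ind3, manila_blocks_ind3.

Definition enc (w : word) : seq bool := [seq s == LP | s <- w].

(* st is the stack of the numbers of components still missing in the open
   brackets, which tells a west step whether it stands for a comma or a ")". *)
Fixpoint decode (k : nat) (st : seq nat) (p : seq bool) : word :=
  match p, st with
  | [::], _ => [::]
  | true :: p', _ => LP :: decode k (k.-1 :: st) p'
  | false :: p', [::] => RP :: decode k [::] p'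
  | false :: p', c :: st' =>
      if c <= 1 then RP :: decode k st' p' else Comma :: decode k (c.-1 :: st') p'
  end.

Lemma enc_decode k st p : enc (decode k st p) = p.
Proof.
elim: p st => [|[] p IH] [|c st] //=; rewrite ?IH //.
by case: ifP; rewrite /= IH.
Qed.

Lemma enc_cat w v : enc (w ++ v) = enc w ++ enc v.
Proof. exact: map_cat. Qed.

Lemma enc_commasep ws : enc (commasep ws) = join_with false (map enc ws).
Proof.
have -> : commasep ws = join_with Comma ws by case: ws.
exact: map_join_with.
Qed.

Lemma enc_bracket ws : enc (bracket ws) = true :: enc (commasep ws) ++ [:: false].
Proof. by rewrite /= enc_cat. Qed.

Section ManilaStructure.

Variable k : nat.

Lemma manila_negz n j w : manila k n (Negz j) w -> n = 0 /\ w = [::].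
Proof. by move=> M; inversion M. Qed.

Lemma manila_blocks_of n i w : manila k n (Posz i) w ->
  exists ws, manila_blocks k i.+1 n ws /\ w = flatten ws.
Proof.
move=> M; inversion M as [|n' ws n_gt0 T|l n' ws l_gt1 B]; subst.
  exists [:: bracket ws]; rewrite /= cats0; split=> //.
  by rewrite -[n]addn0; apply: BlkCons M (BlkNil k).
by exists ws; rewrite prednK //; lia.
Qed.

Lemma manila_cat_prime n1 n2 i w v : manila k n1 0 w -> manila k n2 (Posz i) v ->
  manila k (n1 + n2) (Posz i.+1) (w ++ v).
Proof.
move=> Mw /manila_blocks_of [ws [B ->]].
exact: (ManM3 (l := i.+2) _ (BlkCons Mw B)).
Qed.

Lemma manila_tuple_of ds :
  (forall d, d \in ds -> exists i w, manila k (count id d) i w /\ enc w = d) ->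
  exists ws, manila_tuple k (size ds) (sumn (map (count id) ds)) ws /\ map enc ws = ds.
Proof.
elim: ds => [|d ds IH] H; first by exists [::]; split=> //; constructor.
have [|ws [T enc_ws]] := IH; first by move=> e e_ds; apply: H; rewrite inE e_ds orbT.
have [i [w [M enc_w]]] := H d (mem_head _ _).
by exists (w :: ws); split; [apply: TupCons M T | rewrite /= enc_w enc_ws].
Qed.

End ManilaStructure.

Section ManilaToPaths.

Variable k : nat.
Hypothesis k_gt1 : 1 < k.

Definition decodes (w : word) : Prop :=
  forall st q, decode k st (enc w ++ q) = w ++ decode k st q.

Definition word_spec (n : nat) (w : word) : Prop :=
  [/\ excursion k (enc w), count id (enc w) = n & decodes w].

Definition tuple_spec (c N : nat) (ws : seq word) : Prop :=
  [/\ forall f, walk k f.+1 (f + c) (enc (commasep ws)) = Some f.+1,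
      count id (enc (commasep ws)) = N
    & forall st q, decode k (c :: st) (enc (commasep ws) ++ false :: q)
                   = commasep ws ++ RP :: decode k st q].

Lemma manila_specs :
  (forall n i w, manila k n i w -> word_spec n w) /\
  (forall c N ws, manila_tuple k c N ws -> 0 < c -> tuple_spec c N ws) /\
  (forall l N ws, manila_blocks k l N ws -> word_spec N (flatten ws)).
Proof.
apply: (manila_mut_ind (P := fun n _ w _ => word_spec n w)
  (P0 := fun c N ws _ => 0 < c -> tuple_spec c N ws)
  (P1 := fun _ N ws _ => word_spec N (flatten ws))) => //.
- move=> n ws n_gt0 _ /(_ (ltac:(lia))) [W C D]; split.
  + by rewrite enc_bracket; have [] := excursion_prime k_gt1 (W 0).
  + by rewrite enc_bracket /= count_cat C /=; lia.
  + by move=> st q; rewrite enc_bracket /= -catA /= D -catA.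
- move=> c n1 i1 N w [|v ws] _ [W1 C1 D1] T IH _.
    have [-> ->] : c = 0 /\ N = 0 by inversion T.
    split=> [f||st q]; last by rewrite /= cats0 D1.
      by rewrite /= cats0 addn1; apply: excursion_lift W1.
    by rewrite /= cats0 C1 addn0.
  have c_gt0 : 0 < c by inversion T.
  have [W C D] := IH c_gt0.
  rewrite /tuple_spec.
  have -> : commasep (w :: v :: ws) = w ++ Comma :: commasep (v :: ws) by [].
  rewrite enc_cat /=; split=> [f||st q].
  + rewrite walk_cat (excursion_lift _ W1) /= ?ifT; try lia.
    by rewrite (_ : (f + c.+1).-1 = f + c) ?W //; lia.
  + by rewrite count_cat C1 /= C.
  + rewrite -catA D1 /= ifF; last lia.
    by rewrite D -[RHS]catA.
- move=> l n1 N w ws _ [W1 C1 D1] _ [W C D]; rewrite /word_spec /= enc_cat; split.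
  + by rewrite /excursion walk_cat (eqP W1).
  + by rewrite count_cat C1 C.
  + by move=> st q; rewrite enc_cat -catA D1 D catA.
Qed.

Lemma manila_word_spec n i w : manila k n i w -> word_spec n w.
Proof. exact: manila_specs.1. Qed.

Lemma manila_prime_zeros n w : manila k n 0 w ->
  [/\ excursion k (enc w), inner_zeros k 0 (enc w) = 0 & enc w != [::]].
Proof.
move=> M; inversion M as [|n' ws n_gt0 T|]; subst; last lia.
have [_ [tuple_specs _]] := manila_specs.
have [W _ _] := tuple_specs _ _ _ T (ltac:(lia)).
by rewrite enc_bracket; have [-> ->] := excursion_prime k_gt1 (W 0).
Qed.

Lemma blocks_inner_zeros l N ws : manila_blocks k l N ws ->
  inner_zeros k 0 (enc (flatten ws)) = l.-1.
Proof.
elim=> // {}l n1 {}N w {}ws Mw B IH /=.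
have [exc_w zeros_w nonempty_w] := manila_prime_zeros Mw.
rewrite enc_cat inner_zeros_cat zeros_w (walk_height (eqP exc_w)) IH nonempty_w /=.
case: B IH => [|l' n2 N' w2 ws2 Mw2 _] _ //.
have [_ _ nonempty_w2] := manila_prime_zeros Mw2.
by rewrite /= enc_cat; case: (enc w2) nonempty_w2.
Qed.

Lemma manila_inner_zeros n i w : manila k n (Posz i) w -> inner_zeros k 0 (enc w) = i.
Proof. by move=> /manila_blocks_of [ws [B ->]]; rewrite (blocks_inner_zeros B). Qed.

Lemma excursion_manila p : excursion k p ->
  exists i w, manila k (count id p) i w /\ enc w = p.
Proof.
have [m] := ubnP (size p); elim: m p => // m IH p /ltnSE size_p exc_p.
have [->|nonempty_p] := eqVneq p [::].
  by exists (-1)%R, [::]; split=> //; constructor.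
have [ds [q [def_p size_ds exc_ds exc_q]]] :=
  excursion_first_return k_gt1 exc_p nonempty_p.
have size_q : size q < m by move: size_p; rewrite def_p !size_cat /=; lia.
have [|ws [T enc_ws]] := manila_tuple_of (k := k) (ds := ds).
  move=> d d_ds; apply: IH; last exact: (allP exc_ds).
  by move: size_p (size_join_with false d_ds); rewrite def_p /= !size_cat /=; lia.
rewrite size_ds in T.
have M0 := ManM2 (ltn0Sn _) T.
have enc_M0 : enc (bracket ws) = true :: join_with false ds ++ [:: false].
  by rewrite enc_bracket enc_commasep enc_ws.
have count_M0 : count id (enc (bracket ws)) = (sumn (map (count id) ds)).+1.
  by rewrite enc_M0 /= count_cat count_join_with //=; lia.
rewrite def_p -enc_M0 count_cat count_M0.
have [[j|j] [w [Mq enc_w]]] := IH q size_q exc_q.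
  exists (Posz j.+1), (bracket ws ++ w); rewrite enc_cat enc_w.
  by split=> //; apply: manila_cat_prime.
have [-> eq_w] := manila_negz Mq; rewrite -enc_w eq_w.
by exists 0%R, (bracket ws); rewrite cats0 addn0.
Qed.

End ManilaToPaths.

Lemma count_take_le (T : eqType) (a : pred T) s j : count a (take j s) <= count a s.
Proof. exact: leq_count_subseq (take_subseq s j). Qed.

Section Paths.

Variables k n : nat.

Lemma path_pt_excursion p j : excursion k p -> count id p = n ->
  below k (path_pt k n p j) /\
  online k (path_pt k n p j) = (height k 0 (take j p) == 0).
Proof.
move=> /eqP exc_p count_p; have [x walk_x] := walk_take j exc_p.
have := walk_balance walk_x; rewrite (walk_height walk_x) add0n.
have := count_take_le id p j; rewrite count_p /below /online /path_pt /= mulnBr.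
move: (count id _) (count (fun b => ~~ b) _) => t f le_tn balance.
have : k.-1 * t <= k.-1 * n by rewrite leq_mul2l le_tn orbT.
by split; [|apply/eqP/eqP]; lia.
Qed.

Lemma kpath_excursion p : is_kpath k n p -> excursion k p.
Proof.
case/and3P => /eqP count_p /eqP count_negb_p /allP below_p.
rewrite /excursion walk_of_prefix_bounds ?count_p ?count_negb_p ?add0n ?subnn //.
move=> j le_jp; have := below_p j; rewrite mem_iota ltnS le_jp => /(_ isT).
have := count_take_le id p j; have := count_take_le (fun b => ~~ b) p j.
rewrite count_p count_negb_p /below /path_pt /= add0n mulnBr.
move: (count id _) (count (fun b => ~~ b) _) => t f le_fn le_tn.
have : k.-1 * t <= k.-1 * n by rewrite leq_mul2l le_tn orbT.
lia.
Qed.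

Lemma in_PathsE i p :
  in_Paths k n i p <-> [/\ excursion k p, count id p = n & inner_zeros k 0 p = i].
Proof.
rewrite /in_Paths /touches inner_zerosE.
have touchesE : excursion k p -> count id p = n ->
    count (fun j => online k (path_pt k n p j)) (iota 1 (size p).-1)
    = count (fun j => height k 0 (take j p) == 0) (iota 1 (size p).-1).
  move=> exc_p count_p; apply: eq_count => j.
  by rewrite (path_pt_excursion j exc_p count_p).2.
split=> [[kp <-] | [exc_p count_p <-]].
  have exc_p := kpath_excursion kp.
  have count_p : count id p = n by case/and3P: kp => /eqP.
  by split=> //; rewrite touchesE.
split; last by rewrite touchesE.
have := walk_balance (eqP exc_p); rewrite count_p add0n => balance.
rewrite /is_kpath balance count_p !eqxx !andTb.
by apply/allP => j _; exact: (path_pt_excursion j exc_p count_p).1.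
Qed.

End Paths.

Section Bijection.

Variable k : nat.
Hypothesis k_gt1 : 1 < k.

Lemma manila_in_Paths n i w : manila k n (Posz i) w ->
  in_Paths k n i (enc w) /\ decode k [::] (enc w) = w.
Proof.
move=> M; have [exc_w count_w decodes_w] := manila_word_spec k_gt1 M.
split; first by apply/in_PathsE; split=> //; exact: manila_inner_zeros M.
by have := decodes_w [::] [::]; rewrite !cats0.
Qed.

Lemma in_Paths_manila n i p : 0 < n -> in_Paths k n i p ->
  manila k n (Posz i) (decode k [::] p).
Proof.
move=> n_gt0 /in_PathsE [exc_p count_p zeros_p].
have [[j|j] [w [M enc_w]]] := excursion_manila k_gt1 exc_p; last first.
  by have [n0 _] := manila_negz M; lia.
rewrite count_p in M; have := manila_inner_zeros k_gt1 M.
by rewrite -enc_w (manila_in_Paths M).2 enc_w zeros_p => ->.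
Qed.

End Bijection.

Definition bitseqs (m : nat) : seq (seq bool) :=
  [seq val t | t <- enum {: m.-tuple bool}].

Lemma bitseqs_uniq m : uniq (bitseqs m).
Proof. by rewrite map_inj_uniq ?enum_uniq //; exact: val_inj. Qed.

Lemma mem_bitseqs m p : (p \in bitseqs m) = (size p == m).
Proof.
apply/mapP/eqP => [[t _ ->] | <-]; first exact: size_tuple.
by exists (in_tuple p); rewrite ?mem_enum.
Qed.

Lemma kpath_size k n p : is_kpath k n p -> size p = n + k.-1 * n.
Proof. by case/and3P => /eqP <- /eqP <- _; rewrite -(count_predC id p). Qed.

Lemma Paths_enum k n i : exists sP, uniq sP /\ forall p, in_Paths k n i p <-> p \in sP.
Proof.
exists [seq p <- bitseqs (n + k.-1 * n) | is_kpath k n p && (touches k n p == i)].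
split=> [|p]; first by rewrite filter_uniq ?bitseqs_uniq.
rewrite mem_filter mem_bitseqs; split=> [[kp <-] | /andP [/andP [kp /eqP <-] _]] //.
by rewrite kp eqxx (kpath_size kp) eqxx.
Qed.

Theorem lemma5p5 (k n i : nat) : (2 <= k)%N -> (1 <= n)%N ->
  exists (sM : seq word) (sP : seq (seq bool)),
    [/\ uniq sM, (forall w, manila k n (Posz i) w <-> w \in sM),
        uniq sP, (forall p, in_Paths k n i p <-> p \in sP)
      & size sM = size sP].
Proof.
move=> k_ge2 n_ge1; have [sP [uniq_sP mem_sP]] := Paths_enum k n i.
exists (map (decode k [::]) sP), sP; split=> //; last exact: size_map.
  by rewrite map_inj_uniq // => p q /(congr1 enc); rewrite !enc_decode.
move=> w; split=> [M | /mapP [p /mem_sP in_P ->]].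
  have [in_P decode_w] := manila_in_Paths k_ge2 M.
  by apply/mapP; exists (enc w); [apply/mem_sP | rewrite decode_w].
exact: in_Paths_manila.
Qed.
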